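(* Let $\mathcal K$ be an abstract Krivine structure. For a set $I$ and $\varphi,\psi:I\to\mathcal P(\Pi)$ write $\varphi\vdash\psi$ iff there exists $t\in\mathrm{QP}$ such that for all $i\in I$, $t\perp x$ for every $x\in\{s\cdot\pi:s\in{}^\perp\varphi(i),\ \pi\in\psi(i)\}$. Let $\mathbf P(\mathcal K)$ be the indexed preorder $I\mapsto(\mathcal P(\Pi)^I,\vdash)$, $f\mapsto f^*$ with $f^*(\varphi)=\varphi\circ f$, and $\mathbf P_\bullet(\mathcal K)$ the indexed preorder $I\mapsto(\mathcal P_\bullet(\Pi)^I,\vdash)$, $f\mapsto f^*$. Then the canonical inclusion $\mathbf P_\bullet(\mathcal K)\hookrightarrow\mathbf P(\mathcal K)$ is an equivalence of indexed preorders.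
   Context: An abstract Krivine structure $\mathcal K$ consists of sets $\Lambda,\Pi$, a relation $\perp\subseteq\Lambda\times\Pi$, a map $\mathrm{push}$ written $t\cdot\pi$ (associating to the right), an application $ts$ on $\Lambda$, a subset $\mathrm{QP}\subseteq\Lambda$ closed under application, and $\mathsf K,\mathsf S\in\mathrm{QP}$ with: $t\perp s\cdot\pi\Rightarrow ts\perp\pi$; $t\perp\pi\Rightarrow\mathsf K\perp t\cdot s\cdot\pi$; $tu(su)\perp\pi\Rightarrow\mathsf S\perp t\cdot s\cdot u\cdot\pi$. Polars: $L^\perp=\{\pi:\forall t\in L,\ t\perp\pi\}$, ${}^\perp P=\{t:\forall\pi\in P,\ t\perp\pi\}$; $\overline P=({}^\perp P)^\perp$; $\widehat P=\bigcup_{\pi\in P}\overline{\{\pi\}}$; $\mathcal P_\bullet(\Pi)=\{P:\widehat P=P\}$. An indexed preorder is a functor $\mathbf{Set}^{op}\to\mathbf{Ord}$. An indexed monotone map $\sigma:\mathbf C\to\mathbf D$ is a family of monotone maps $\sigma_I:\mathbf C(I)\to\mathbf D(I)$ with $\sigma_J(f^*\varphi)\cong f^*(\sigma_I\varphi)$ for all $f:J\to I$ (where $\cong$ means $\le$ both ways); it is an equivalence if there is an indexed monotone $\tau:\mathbf D\to\mathbf C$ with $\tau\circ\sigma\cong\mathrm{id}$ and $\sigma\circ\tau\cong\mathrm{id}$ componentwise and pointwise. *)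

Set Implicit Arguments.

Record AKS := {
  Lam : Type;
  Pi : Type;
  perp : Lam -> Pi -> Prop;
  push : Lam -> Pi -> Pi;
  app : Lam -> Lam -> Lam;
  QP : Lam -> Prop;
  QP_app : forall t s, QP t -> QP s -> QP (app t s);
  kK : Lam;
  kS : Lam;
  QP_K : QP kK;
  QP_S : QP kS;
  ax_push : forall t s pi, perp t (push s pi) -> perp (app t s) pi;
  ax_K : forall t s pi, perp t pi -> perp kK (push t (push s pi));
  ax_S : forall t s u pi, perp (app (app t u) (app s u)) pi ->
           perp kS (push t (push s (push u pi)))
}.

Section Polars.
Variable K : AKS.

Definition lpolar (L : Lam K -> Prop) : Pi K -> Prop :=
  fun pi => forall t, L t -> perp K t pi.
Definition rpolar (P : Pi K -> Prop) : Lam K -> Prop :=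
  fun t => forall pi, P pi -> perp K t pi.
Definition bclos (P : Pi K -> Prop) : Pi K -> Prop := lpolar (rpolar P).
Definition hat (P : Pi K -> Prop) : Pi K -> Prop :=
  fun x => exists pi, P pi /\ bclos (fun y => y = pi) x.
Definition Pbullet : Type := { P : Pi K -> Prop | forall x, hat P x <-> P x }.

Definition entails (I : Type) (phi psi : I -> Pi K -> Prop) : Prop :=
  exists t, QP K t /\
    forall i s pi, rpolar (phi i) s -> psi i pi -> perp K t (push K s pi).
End Polars.

(** * Indexed preorders (functors Set^op -> Ord), given by their data *)
Record IndexedPreorder := {
  ip_car : Type -> Type;
  ip_le : forall {I}, ip_car I -> ip_car I -> Prop;
  ip_re : forall {I J}, (J -> I) -> ip_car I -> ip_car J
}.

Definition ip_iso (C : IndexedPreorder) {I} (x y : ip_car C I) : Prop :=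
  ip_le C x y /\ ip_le C y x.

Definition IndexedMonotone (C D : IndexedPreorder) : Type :=
  forall I, ip_car C I -> ip_car D I.

Definition is_indexed_monotone C D (s : IndexedMonotone C D) : Prop :=
  (forall I (x y : ip_car C I), ip_le C x y -> ip_le D (s I x) (s I y)) /\
  (forall I J (f : J -> I) (x : ip_car C I),
      ip_iso D (s J (ip_re C f x)) (ip_re D f (s I x))).

Definition is_indexed_equivalence C D (s : IndexedMonotone C D) : Prop :=
  is_indexed_monotone s /\
  exists t : IndexedMonotone D C,
    is_indexed_monotone t /\
    (forall I (x : ip_car C I), ip_iso C (t I (s I x)) x) /\
    (forall I (y : ip_car D I), ip_iso D (s I (t I y)) y).

Definition PK (K : AKS) : IndexedPreorder := {|
  ip_car := fun I => I -> Pi K -> Prop;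
  ip_le := fun I phi psi => @entails K I phi psi;
  ip_re := fun I J f phi => fun j => phi (f j)
|}.

Definition PbK (K : AKS) : IndexedPreorder := {|
  ip_car := fun I => I -> Pbullet K;
  ip_le := fun I phi psi =>
     @entails K I (fun i => proj1_sig (phi i)) (fun i => proj1_sig (psi i));
  ip_re := fun I J f phi => fun j => phi (f j)
|}.

Definition incl (K : AKS) : IndexedMonotone (PbK K) (PK K) :=
  fun I phi => fun i => proj1_sig (phi i).


(* The biorthogonal closure [bclos P = (^⊥P)^⊥] has the same left polar as [P],
   so [P] and [bclos P] entail each other through the identity combinator
   [I = S K K].  Since [bclos P] is always in [P_bullet(Pi)], pointwise closure
   is a quasi-inverse of the inclusion; it is monotone because entailment is
   transitive, composition being realized by [S (K u) t]. *)

Local Arguments rpolar {K} P%_function_scope _.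
Local Arguments bclos {K} P%_function_scope _.
Local Arguments hat {K} P%_function_scope _.
Local Arguments entails {K} [I]%_type_scope (phi psi)%_function_scope.

Section Entailment.
Variable K : AKS.

Definition kI : Lam K := app K (app K (kS K) (kK K)) (kK K).

Lemma QP_kI : QP K kI.
Proof. apply QP_app; [apply QP_app|]; auto using QP_K, QP_S. Qed.

Lemma kI_perp s pi : perp K s pi -> perp K kI (push K s pi).
Proof. intros H. apply ax_push, ax_push, ax_S, ax_push, ax_push, ax_K, H. Qed.

Lemma entails_of_perp I (phi psi : I -> Pi K -> Prop) :
  (forall i s pi, rpolar (phi i) s -> psi i pi -> perp K s pi) ->
  entails phi psi.
Proof.
  intros H. exists kI. split; [exact QP_kI|].
  intros i s pi Hs Hpi. apply kI_perp; eauto.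
Qed.

Lemma entails_refl I (phi : I -> Pi K -> Prop) : entails phi phi.
Proof. apply entails_of_perp. intros i s pi Hs Hpi. exact (Hs pi Hpi). Qed.

Lemma entails_trans I (phi psi chi : I -> Pi K -> Prop) :
  entails phi psi -> entails psi chi -> entails phi chi.
Proof.
  intros [t [Qt Ht]] [u [Qu Hu]].
  exists (app K (app K (kS K) (app K (kK K) u)) t).
  split; [auto using QP_app, QP_S, QP_K|].
  intros i s pi Hs Hpi.
  assert (Hts : rpolar (psi i) (app K t s))
    by (intros rho Hrho; apply ax_push; exact (Ht i s rho Hs Hrho)).
  apply ax_push, ax_push, ax_S, ax_push, ax_push, ax_push, ax_K.
  exact (Hu i _ pi Hts Hpi).
Qed.

Lemma rpolar_bclos (P : Pi K -> Prop) t : rpolar (bclos P) t -> rpolar P t.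
Proof. intros H pi Hpi. apply H. intros u Hu. exact (Hu pi Hpi). Qed.

Lemma bclos_entails I (phi : I -> Pi K -> Prop) :
  entails (fun i => bclos (phi i)) phi.
Proof.
  apply entails_of_perp. intros i s pi Hs Hpi. exact (rpolar_bclos _ _ Hs pi Hpi).
Qed.

Lemma entails_bclos I (phi : I -> Pi K -> Prop) :
  entails phi (fun i => bclos (phi i)).
Proof. apply entails_of_perp. intros i s pi Hs Hpi. exact (Hpi s Hs). Qed.

Lemma bclos_mono I (phi psi : I -> Pi K -> Prop) :
  entails phi psi -> entails (fun i => bclos (phi i)) (fun i => bclos (psi i)).
Proof.
  intros H. eapply entails_trans; [apply bclos_entails|].
  eapply entails_trans; [exact H|apply entails_bclos].
Qed.

Lemma hat_bclos (P : Pi K -> Prop) x : hat (bclos P) x <-> bclos P x.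
Proof.
  split.
  - intros [pi [Hpi Hx]] t Ht. apply Hx. intros y ->. exact (Hpi t Ht).
  - intros Hx. exists x. split; [exact Hx|]. intros t Ht. exact (Ht x eq_refl).
Qed.

Definition bclos_bullet (P : Pi K -> Prop) : Pbullet K :=
  exist _ (bclos P) (hat_bclos P).

Definition closure : IndexedMonotone (PK K) (PbK K) :=
  fun I phi i => bclos_bullet (phi i).

End Entailment.

Lemma incl_indexed_monotone (K : AKS) : is_indexed_monotone (@incl K).
Proof.
  split.
  - intros I x y H. exact H.
  - intros I J f x. split; apply entails_refl.
Qed.

Lemma closure_indexed_monotone (K : AKS) : is_indexed_monotone (@closure K).
Proof.
  split.
  - intros I x y H. exact (bclos_mono K _ _ _ H).
  - intros I J f x. split; apply entails_refl.
Qed.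

Theorem mainTheorem15 (K : AKS) : is_indexed_equivalence (@incl K).
Proof.
  split; [exact (incl_indexed_monotone K)|].
  exists (@closure K).
  split; [exact (closure_indexed_monotone K)|].
  split; intros I x; split; first [apply bclos_entails | apply entails_bclos].
Qed.
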